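(* For all integers $m,n\ge2$, the (unnormalized) diagonal positive matrices in $M_m(\mathbb{C})\otimes M_n(\mathbb{C})$ $$\rho_1=\operatorname{diag}(\sqrt2+1,\sqrt2+1,1,\dots,1),\qquad \rho_2=\operatorname{diag}(2,2,2,1,\dots,1)$$ are absolutely PPT; that is, for every unitary $U$ of order $mn$, both $(U\rho_1U^\dagger)^\Gamma\ge0$ and $(U\rho_2U^\dagger)^\Gamma\ge0$.
   Context: The partial transpose is $M^\Gamma:=(T\otimes\mathrm{id})(M)$ with $T$ the transpose on the first factor $M_m(\mathbb{C})$. A (possibly unnormalized) positive semidefinite matrix $\rho$ is absolutely PPT if $(U\rho U^\dagger)^\Gamma$ is positive semidefinite for every global unitary $U$ on $\mathbb{C}^m\otimes\mathbb{C}^n$. *)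

(* Complex scalars: an arbitrary numClosedFieldType C
   (algebraically closed field with conjugation and order, e.g. the complex numbers). *)
From HB Require Import structures.
From mathcomp Require Import all_boot all_order all_algebra.
Set Implicit Arguments. Unset Strict Implicit. Unset Printing Implicit Defensive.
Import Order.TTheory GRing.Theory Num.Theory.
Local Open Scope ring_scope.

Definition adjmx (C : numClosedFieldType) (p q : nat) (M : 'M[C]_(p, q)) : 'M[C]_(q, p) :=
  map_mx Num.conj (M^T).

Definition psdmx (C : numClosedFieldType) (N : nat) (M : 'M[C]_N) : Prop :=
  adjmx M = M /\ forall v : 'cV[C]_N, 0 <= (adjmx v *m M *m v) 0 0.

(* identification C^m (x) C^n = C^(m*n): the basis vector e_i (x) f_k has
   index mxvec_index i k (MathComp's standard row-major pairing). *)
Definition tpair (m n : nat) (a : 'I_(m * n)) : 'I_m * 'I_n :=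
  enum_val (cast_ord (esym (mxvec_cast m n)) a).

(* partial transpose on the first factor M_m(C):
   (M^Gamma)_{(i,k),(j,l)} = M_{(j,k),(i,l)} *)
Definition ptrans (C : numClosedFieldType) (m n : nat) (M : 'M[C]_(m * n)) : 'M[C]_(m * n) :=
  \matrix_(a, b) M (mxvec_index (tpair b).1 (tpair a).2)
                   (mxvec_index (tpair a).1 (tpair b).2).

Definition absPPT (C : numClosedFieldType) (m n : nat) (rho : 'M[C]_(m * n)) : Prop :=
  psdmx rho /\
  forall U : 'M[C]_(m * n), U *m adjmx U = 1%:M ->
    psdmx (ptrans (U *m rho *m adjmx U)).

Definition rho1 (C : numClosedFieldType) (N : nat) : 'M[C]_N :=
  diag_mx (\row_(a < N) if (a < 2)%N then sqrtC 2 + 1 else 1).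
Definition rho2 (C : numClosedFieldType) (N : nat) : 'M[C]_N :=
  diag_mx (\row_(a < N) if (a < 3)%N then 2 else 1).

From mathcomp Require Import all_boot all_order all_algebra.
From mathcomp Require Import ring zify.

(* Write rho = 1 + kappa P_k, where P_k projects onto the first k basis vectors and
   (k, kappa) = (2, sqrt 2) for rho_1, (3, 1) for rho_2.  For a unitary U with columns
   u_c and a vector v, <v, (U rho U^* )^Gamma v> = |v|^2 + kappa sum_(c < k) F_c with
   F_c = <v, (u_c u_c^* )^Gamma v>.  Reshape v into an m x n matrix with singular values
   s_q.  Then F_c >= - sum_(p < q) s_p s_q P_c(p, q), where P_c(p, q) is half the squared
   overlap of u_c with the antisymmetrised product of the (p, q) and (q, p) singular
   vectors.  By Bessel's inequality (in c and in (p, q)) the weights sum_(c < k) P_c lie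
   in [0, 1] and have total mass at most k, so the negative part is at most the largest
   sum of s_p s_q over k pairs.  AM-GM on the graph formed by those pairs (a star, or a
   graph of small degree) bounds kappa times that sum by sum_q s_q^2 = |v|^2. *)

Set Implicit Arguments. Unset Strict Implicit. Unset Printing Implicit Defensive.
Import Order.TTheory GRing.Theory Num.Theory.
Local Open Scope ring_scope.

Section TensorIndex.
Variables m n : nat.

Lemma tpairK (i : 'I_m) (k : 'I_n) : tpair (mxvec_index i k) = (i, k).
Proof. by rewrite /tpair /mxvec_index cast_ordK enum_rankK. Qed.

Lemma big_mxvec_index (R : nmodType) (F : 'I_(m * n) -> R) :
  \sum_a F a = \sum_i \sum_k F (mxvec_index i k).
Proof.
rewrite pair_big (reindex (uncurry (@mxvec_index m n))) /=.
  by apply: eq_bigr => -[].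
exact: curry_mxvec_bij.
Qed.

Lemma ptrans1 (C : numClosedFieldType) : ptrans (1%:M : 'M[C]_(m * n)) = 1%:M.
Proof.
apply/matrixP => a b; rewrite !mxE; congr (_%:R); congr nat_of_bool.
case/mxvec_indexP: a => i k; case/mxvec_indexP: b => j l; rewrite !tpairK /=.
by apply/eqP/eqP => /(congr1 (@tpair m n)); rewrite !tpairK => -[-> ->].
Qed.

End TensorIndex.

Section Adjoint.
Variable C : numClosedFieldType.

Lemma adjmxE p q (M : 'M[C]_(p, q)) i j : adjmx M i j = (M j i)^*.
Proof. by rewrite !mxE. Qed.

Lemma adjmxM p q r (A : 'M[C]_(p, q)) (B : 'M[C]_(q, r)) :
  adjmx (A *m B) = adjmx B *m adjmx A.
Proof. by rewrite /adjmx trmx_mul map_mxM. Qed.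

Lemma adjmxK p q (A : 'M[C]_(p, q)) : adjmx (adjmx A) = A.
Proof. by apply/matrixP => i j; rewrite !mxE conjCK. Qed.

Lemma adjmx_formE N (v : 'cV[C]_N) (M : 'M[C]_N) :
  (adjmx v *m M *m v) 0 0 = \sum_a \sum_b (v a 0)^* * M a b * v b 0.
Proof.
rewrite exchange_big mxE; apply: eq_bigr => b _; rewrite mxE big_distrl /=.
by apply: eq_bigr => a _; rewrite !mxE.
Qed.

Lemma ptrans_selfadj m n (M : 'M[C]_(m * n)) :
  adjmx M = M -> adjmx (ptrans M) = ptrans M.
Proof. by move=> hM; apply/matrixP => a b; rewrite adjmxE !mxE -[in RHS]hM adjmxE. Qed.

Lemma conjugate_selfadj N (U H : 'M[C]_N) :
  adjmx H = H -> adjmx (U *m H *m adjmx U) = U *m H *m adjmx U.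
Proof. by move=> hH; rewrite !adjmxM adjmxK hH mulmxA. Qed.

Lemma diag_mx_selfadj N (d : 'rV[C]_N) :
  (forall i, 0 <= d 0 i) -> adjmx (diag_mx d) = diag_mx d.
Proof.
move=> d_ge0; apply/matrixP => i j; rewrite adjmxE !mxE.
by case: eqVneq => [->|_]; rewrite ?mulr1n ?geC0_conj ?mulr0n ?conjC0.
Qed.

Lemma psdmx_diag N (d : 'rV[C]_N) : (forall i, 0 <= d 0 i) -> psdmx (diag_mx d).
Proof.
move=> d_ge0; split; first exact: diag_mx_selfadj.
move=> v; rewrite adjmx_formE; apply: sumr_ge0 => a _.
rewrite (bigD1 a) //= big1 => [|b ba]; last first.
  by rewrite !mxE eq_sym (negPf ba) mulr0n mulr0 mul0r.
by rewrite addr0 !mxE eqxx mulr1n mulrAC -normCKC mulr_ge0 ?exprn_ge0.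
Qed.

End Adjoint.

Section Selection.
Variables (R : numDomainType) (I : finType) (D : {set I}) (w : I -> R) (K : nat).
Hypothesis w_ge0 : {in D, forall e, 0 <= w e}.

Let admissible (S : {set I}) := (S \subset D) && (#|S| <= K)%N.

Lemma ex_selection_threshold (S : {set I}) : (0 < K)%N -> admissible S ->
  (forall S', admissible S' -> \sum_(e in S') w e <= \sum_(e in S) w e) ->
  exists lam, [/\ 0 <= lam, {in D :\: S, forall e, w e <= lam},
                  {in S, forall f, lam <= w f} & lam * K%:R = lam * #|S|%:R].
Proof.
move=> K_gt0 /andP[SD SK] Smax.
have wS : {in S, forall f, 0 <= w f} by move=> f /(subsetP SD); apply: w_ge0.
have [SltK | KleS] := ltnP #|S| K.
  exists 0; split => //; last by rewrite !mul0r.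
  move=> e /setDP[eD eS]; have := Smax (e |: S).
  rewrite /admissible subUset sub1set eD SD cardsU1 eS add1n SltK big_setU1 //=.
  by rewrite gerDr => /(_ isT).
have SK' : #|S| = K by apply/eqP; rewrite eqn_leq SK.
have [f0 f0S] : exists f0, f0 \in S by apply/set0Pn; rewrite -card_gt0 SK'.
have [f f_S f_min] := @real_arg_minP _ _ _ _ w f0S (fun f fS => ger0_real (wS f fS)).
exists (w f); split; rewrite ?SK' //; first exact: wS.
move=> e /setDP[eD eS]; have := Smax (e |: (S :\ f)).
rewrite /admissible subUset sub1set eD (subset_trans (subD1set S f) SD).
have fS : f \in S := f_S.
have cardSf : (#|S :\ f|).+1 = K by rewrite -SK' (cardsD1 f S) fS.
rewrite cardsU1 !inE negb_and eS orbT add1n cardSf leqnn.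
by rewrite big_setU1 ?inE ?negb_and ?eS ?orbT //= (big_setD1 f fS) /= lerD2r => /(_ isT).
Qed.

Lemma sum_frac_selection_le (P : I -> R) (B : R) : (0 < K)%N ->
  {in D, forall e, 0 <= P e <= 1} -> \sum_(e in D) P e <= K%:R ->
  (forall S : {set I}, S \subset D -> (#|S| <= K)%N -> \sum_(e in S) w e <= B) ->
  \sum_(e in D) w e * P e <= B.
Proof.
move=> K_gt0 P01 sumP wB.
(* Exchange argument against a heaviest admissible S: mass outside S is worth at most
   lam, inside S at least lam. *)
have adm0 : admissible set0 by rewrite /admissible sub0set cards0.
have admR S : admissible S -> \sum_(e in S) w e \is Num.real.
  by case/andP => SD _; apply/ger0_real/sumr_ge0 => e /(subsetP SD); apply: w_ge0.
have [S admS Smax] := @real_arg_maxP _ _ _ _ (fun S : {set I} => \sum_(e in S) w e) adm0 admR.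
have [lam [lam_ge0 lam_out lam_in lamK]] := ex_selection_threshold K_gt0 admS Smax.
have /andP[SD SK] := admS.
have PS : {in S, forall f, 0 <= P f <= 1} by move=> f /(subsetP SD); apply: P01.
rewrite (big_setID S) /= (setIidPr SD) in sumP.
have out_le : \sum_(e in D :\: S) w e * P e <= lam * (K%:R - \sum_(e in S) P e).
  apply: le_trans (_ : lam * \sum_(e in D :\: S) P e <= _); last first.
    by rewrite ler_wpM2l // lerBrDl.
  rewrite mulr_sumr; apply: ler_sum => e eDS.
  have /setDP[eD _] := eDS; have /andP[P_ge0 _] := P01 e eD.
  by rewrite ler_wpM2r // lam_out.
rewrite (big_setID S) /= (setIidPr SD).
apply: le_trans (wB S SD SK); apply: le_trans (lerD (lexx _) out_le) _.
rewrite mulrBr lamK mulr_natr -sumr_const mulr_sumr -sumrB -big_split /=.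
apply: ler_sum => f fS; have /andP[_ Pf_le1] := PS f fS.
have lam_le : lam * (1 - P f) <= w f * (1 - P f) by rewrite ler_wpM2r ?subr_ge0 ?lam_in.
rewrite -{1}(mulr1 lam) -mulrBr; apply: le_trans (lerD (lexx _) lam_le) _.
by rewrite mulrBr mulr1 addrC subrK.
Qed.

End Selection.

Definition upper_pairs n : {set 'I_n * 'I_n} := [set e : 'I_n * 'I_n | (e.1 < e.2)%N].
Definition sumsq (R : numDomainType) n (sg : 'I_n -> R) := \sum_j sg j ^+ 2.
Definition pair_weight (R : numDomainType) n (sg : 'I_n -> R) (e : 'I_n * 'I_n) :=
  sg e.1 * sg e.2.
Definition degree n (S : {set 'I_n * 'I_n}) j :=
  (#|[set e in S | e.1 == j]| + #|[set e in S | e.2 == j]|)%N.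

Lemma ler_sum_subset (R : numDomainType) (I : finType) (A B : {set I}) (F : I -> R) :
  A \subset B -> {in B, forall i, 0 <= F i} -> \sum_(i in A) F i <= \sum_(i in B) F i.
Proof.
move=> AB F_ge0; rewrite [X in _ <= X](big_setID A) /= (setIidPr AB) lerDl.
by apply: sumr_ge0 => i /setDP[iB _]; apply: F_ge0.
Qed.

Section PairWeights.
Variable R : numFieldType.

Lemma mul_le_amgm (a b t : R) : 0 <= a -> 0 <= b -> 0 < t ->
  a * b <= (t * a ^+ 2 + b ^+ 2 / t) / 2.
Proof.
move=> a_ge0 b_ge0 t_gt0; rewrite -subr_ge0.
have -> : (t * a ^+ 2 + b ^+ 2 / t) / 2 - a * b = (t * a - b) ^+ 2 / (2 * t).
  by field; rewrite gt_eqF.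
apply: divr_ge0; last by rewrite mulr_ge0 // ltW.
by rewrite -realEsqr; apply: rpredB; apply: ger0_real; rewrite // mulr_ge0 // ltW.
Qed.

Variables (n : nat) (sg : 'I_n -> R).
Hypothesis sg_ge0 : forall j, 0 <= sg j.

Lemma sumsq_ge c : sg c ^+ 2 <= sumsq sg.
Proof. by rewrite /sumsq (bigD1 c) //= lerDl sumr_ge0 // => j _; rewrite exprn_ge0. Qed.

Lemma sum_endpoint (S : {set 'I_n * 'I_n}) (g : 'I_n * 'I_n -> 'I_n) (f : 'I_n -> R) :
  \sum_(e in S) f (g e) = \sum_j f j *+ #|[set e in S | g e == j]|.
Proof.
rewrite (partition_big g xpredT) //=; apply: eq_bigr => j _.
rewrite -sumr_const; apply: eq_big => [e|e]; first by rewrite inE.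
by case/andP => _ /eqP ->.
Qed.

Lemma weight_le_degree (S : {set 'I_n * 'I_n}) (d : nat) :
  (forall j, (degree S j <= d)%N) -> \sum_(e in S) pair_weight sg e <= d%:R / 2 * sumsq sg.
Proof.
move=> deg_le.
apply: le_trans (_ : \sum_(e in S) (sg e.1 ^+ 2 + sg e.2 ^+ 2) / 2 <= _).
  apply: ler_sum => e _.
  by move: (mul_le_amgm (sg_ge0 e.1) (sg_ge0 e.2) ltr01); rewrite !mul1r divr1.
rewrite -mulr_suml big_split /= !(sum_endpoint S _ (fun j => sg j ^+ 2)) -big_split /=.
rewrite /sumsq mulr_suml mulr_sumr; apply: ler_sum => j _.
rewrite -mulrnDr -/(degree S j) [X in _ <= X]mulrAC mulr_natl.
rewrite ler_wpM2r ?invr_ge0 ?ler0n //.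
exact: ler_wpMn2l (exprn_ge0 _ (sg_ge0 j)) _ _ (deg_le j).
Qed.

Section UpperPairs.
Variable S : {set 'I_n * 'I_n}.
Hypothesis S_upper : S \subset upper_pairs n.

Lemma degreeE c : degree S c = #|[set e in S | (e.1 == c) || (e.2 == c)]|.
Proof.
have -> : [set e in S | (e.1 == c) || (e.2 == c)] =
          [set e in S | e.1 == c] :|: [set e in S | e.2 == c].
  by apply/setP => e; rewrite !inE andb_orr.
rewrite cardsU (_ : _ :&: _ = set0) ?cards0 ?subn0 //.
apply/setP => e; rewrite !inE; apply/negP => /andP[/andP[eS /eqP e1c] /andP[_ /eqP e2c]].
by have := subsetP S_upper e eS; rewrite inE e1c e2c ltnn.
Qed.

Lemma degree_le_card c : (degree S c <= #|S|)%N.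
Proof.
by rewrite degreeE; apply/subset_leq_card/subsetP => e; rewrite inE => /andP[].
Qed.

Lemma degree_card_star c : (#|S| <= degree S c)%N ->
  {in S, forall e, (e.1 == c) || (e.2 == c)}.
Proof.
rewrite degreeE => S_le e eS.
have /eqP SE : [set e in S | (e.1 == c) || (e.2 == c)] == S.
  by rewrite eqEcard S_le andbT; apply/subsetP => x; rewrite inE => /andP[].
by move: eS; rewrite -SE inE => /andP[].
Qed.

Definition other_end c (e : 'I_n * 'I_n) := if e.1 == c then e.2 else e.1.

Section Star.
Variable c : 'I_n.
Hypothesis S_star : {in S, forall e, (e.1 == c) || (e.2 == c)}.

Lemma other_end_inj : {in S &, injective (other_end c)}.
Proof.
move=> [a1 a2] [f1 f2] eS fS; have := S_star eS; have := S_star fS.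
have := subsetP S_upper _ eS; have := subsetP S_upper _ fS; rewrite !inE /other_end /=.
case: (eqVneq a1 c) => [->|ne1]; case: (eqVneq f1 c) => [->|nf1] /=.
- by move=> _ _ _ _ ->.
- by move=> lf le /eqP f2c _ eq; subst; move: lf le; lia.
- by move=> lf le _ /eqP e2c eq; subst; move: lf le; lia.
- by move=> _ _ /eqP f2c /eqP e2c ->; rewrite f2c e2c.
Qed.

Lemma sum_other_end_le : \sum_(e in S) sg (other_end c e) ^+ 2 <= sumsq sg - sg c ^+ 2.
Proof.
rewrite -(big_imset (fun j => sg j ^+ 2) other_end_inj) /=.
have -> : sumsq sg - sg c ^+ 2 = \sum_(j in [set j | j != c]) sg j ^+ 2.
  by rewrite /sumsq (bigD1 c) //= addrC addrK; apply: eq_bigl => j; rewrite inE.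
apply: ler_sum_subset => [|j _]; last exact: exprn_ge0.
apply/subsetP => j /imsetP [e eS ->]; rewrite inE /other_end.
have := subsetP S_upper _ eS; have := S_star eS; rewrite inE.
by case: eqP => [-> _ /= |_ /= /eqP <-]; rewrite ?neq_ltn => ->; rewrite ?orbT.
Qed.

Lemma weight_star_le (t : R) : 0 < t ->
  \sum_(e in S) pair_weight sg e <=
    #|S|%:R * t / 2 * sg c ^+ 2 + (sumsq sg - sg c ^+ 2) / (2 * t).
Proof.
move=> t_gt0.
have weightE e : e \in S -> pair_weight sg e = sg c * sg (other_end c e).
  move=> eS; rewrite /pair_weight /other_end; have := S_star eS.
  by case: eqP => [-> //|_] /= /eqP ->; rewrite mulrC.
apply: le_trans (_ : \sum_(e in S) (t * sg c ^+ 2 + sg (other_end c e) ^+ 2 / t) / 2 <= _).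
  by apply: ler_sum => e eS; rewrite weightE // mul_le_amgm.
rewrite -mulr_suml big_split /= sumr_const -mulr_suml.
have -> : (t * sg c ^+ 2 *+ #|S| + (\sum_(e in S) sg (other_end c e) ^+ 2) / t) / 2 =
    #|S|%:R * t / 2 * sg c ^+ 2 + (\sum_(e in S) sg (other_end c e) ^+ 2) / (2 * t).
  by rewrite -mulr_natr; field; rewrite gt_eqF.
by rewrite lerD2l ler_wpM2r ?sum_other_end_le // invr_ge0 mulr_ge0 // ltW.
Qed.

End Star.
End UpperPairs.

Lemma weight_card3_le (S : {set 'I_n * 'I_n}) : S \subset upper_pairs n -> (#|S| <= 3)%N ->
  \sum_(e in S) pair_weight sg e <= sumsq sg.
Proof.
move=> S_upper S_le3.
have [/forallP deg_le2 | /forallPn [c]] := boolP [forall j, (degree S j <= 2)%N].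
  apply: le_trans (weight_le_degree (d := 2) deg_le2) _.
  by rewrite divff ?mul1r // pnatr_eq0.
rewrite -ltnNge => deg_gt2.
have S3 : #|S| = 3%N by apply/eqP; rewrite eqn_leq S_le3 (leq_trans deg_gt2) ?degree_le_card.
(* t = 2/3 makes the coefficient of [sg c ^+ 2] in the star bound equal to 1. *)
have t_gt0 : 0 < 2 / 3 :> R by rewrite divr_gt0 ?ltr0n.
have S_star := degree_card_star S_upper (leq_trans S_le3 deg_gt2).
apply: le_trans (weight_star_le S_upper S_star t_gt0) _; rewrite S3.
have := sumsq_ge c; set x := sg c ^+ 2; set s := sumsq sg => x_le_s.
have -> : 3%:R * (2 / 3) / 2 * x + (s - x) / (2 * (2 / 3)) = s - (s - x) / 4 by field.
by rewrite gerBl divr_ge0 ?subr_ge0 ?ler0n.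
Qed.

Lemma weight_card2_le (r : R) (S : {set 'I_n * 'I_n}) : 0 < r -> r ^+ 2 = 2 ->
  S \subset upper_pairs n -> (#|S| <= 2)%N ->
  r * \sum_(e in S) pair_weight sg e <= sumsq sg.
Proof.
move=> r_gt0 r2 S_upper S_le2.
have s_ge0 : 0 <= sumsq sg by rewrite sumr_ge0 // => j _; rewrite exprn_ge0.
have [/forallP deg_le1 | /forallPn [c]] := boolP [forall j, (degree S j <= 1)%N].
  apply: le_trans (ler_wpM2l (ltW r_gt0) (weight_le_degree (d := 1) deg_le1)) _.
  rewrite mulrA ler_piMl // mul1r ler_pdivrMr ?ltr0n // mul1r.
  by rewrite -(ler_pXn2r (isT : (0 < 2)%N)) ?nnegrE ?ler0n ?(ltW r_gt0) // r2 -natrX ler_nat.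
rewrite -ltnNge => deg_gt1.
have S2 : #|S| = 2%N by apply/eqP; rewrite eqn_leq S_le2 (leq_trans deg_gt1) ?degree_le_card.
(* Likewise t = r / 2, after scaling by r. *)
have t_gt0 : 0 < r / 2 by rewrite divr_gt0 ?ltr0n.
have S_star := degree_card_star S_upper (leq_trans S_le2 deg_gt1).
apply: le_trans (ler_wpM2l (ltW r_gt0) (weight_star_le S_upper S_star t_gt0)) _; rewrite S2.
set x := sg c ^+ 2; set s := sumsq sg.
have -> : r * (2%:R * (r / 2) / 2 * x + (s - x) / (2 * (r / 2))) = r ^+ 2 / 2 * x + (s - x).
  by field; rewrite gt_eqF.
by rewrite r2 divff ?pnatr_eq0 // mul1r addrC subrK.
Qed.

End PairWeights.

Section FrobeniusProduct.
Variables (C : numClosedFieldType) (p q : nat).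

Definition mxdot (X Y : 'M[C]_(p, q)) : C := \sum_i \sum_j X i j * (Y i j)^*.

Lemma mxdotC X Y : mxdot X Y = (mxdot Y X)^*.
Proof.
rewrite /mxdot rmorph_sum; apply: eq_bigr => i _; rewrite rmorph_sum.
by apply: eq_bigr => j _; rewrite rmorphM /= conjCK mulrC.
Qed.

Lemma mxdot_suml (I : finType) (P : pred I) (F : I -> 'M[C]_(p, q)) Z :
  mxdot (\sum_(i | P i) F i) Z = \sum_(i | P i) mxdot (F i) Z.
Proof.
rewrite /mxdot; under eq_bigr => i _ do under eq_bigr => j _ do rewrite summxE mulr_suml.
by under eq_bigr => i _ do rewrite exchange_big; rewrite exchange_big.
Qed.

Lemma mxdotBl X Y Z : mxdot (X - Y) Z = mxdot X Z - mxdot Y Z.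
Proof.
rewrite /mxdot -sumrB; apply: eq_bigr => i _; rewrite -sumrB.
by apply: eq_bigr => j _; rewrite !mxE mulrBl.
Qed.

Lemma mxdotZl a X Z : mxdot (a *: X) Z = a * mxdot X Z.
Proof.
rewrite /mxdot mulr_sumr; apply: eq_bigr => i _; rewrite mulr_sumr.
by apply: eq_bigr => j _; rewrite mxE mulrA.
Qed.

Lemma mxdotBr X Y Z : mxdot X (Y - Z) = mxdot X Y - mxdot X Z.
Proof. by rewrite mxdotC mxdotBl rmorphB /= -!mxdotC. Qed.

Lemma mxdotZr a X Z : mxdot X (a *: Z) = a^* * mxdot X Z.
Proof. by rewrite mxdotC mxdotZl rmorphM /= -mxdotC. Qed.

Lemma mxdot_sumr (I : finType) (P : pred I) (F : I -> 'M[C]_(p, q)) Z :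
  mxdot Z (\sum_(i | P i) F i) = \sum_(i | P i) mxdot Z (F i).
Proof. by rewrite mxdotC mxdot_suml rmorph_sum /=; apply: eq_bigr => i _; rewrite -mxdotC. Qed.

Lemma mxdot_ge0 X : 0 <= mxdot X X.
Proof. by apply: sumr_ge0 => i _; apply: sumr_ge0 => j _; rewrite -normCK exprn_ge0. Qed.

Lemma bessel (I : finType) (P : pred I) (E : I -> 'M[C]_(p, q)) X :
  (forall i j, P i -> P j -> i != j -> mxdot (E i) (E j) = 0) ->
  (forall i, P i -> mxdot (E i) (E i) <= 1) ->
  \sum_(i | P i) `|mxdot X (E i)| ^+ 2 <= mxdot X X.
Proof.
move=> E_orth E_norm; set c := fun i => mxdot X (E i); set s := \sum_(i | P i) `|c i| ^+ 2.
set Y := \sum_(i | P i) c i *: E i.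
have XY : mxdot X Y = s by rewrite mxdot_sumr; apply: eq_bigr => i _; rewrite mxdotZr normCK mulrC.
have YX : mxdot Y X = s.
  by rewrite mxdotC XY rmorph_sum /=; apply: eq_bigr => i _; rewrite geC0_conj ?exprn_ge0.
have YY : mxdot Y Y <= s.
  rewrite mxdot_suml; apply: ler_sum => i Pi.
  rewrite mxdotZl mxdot_sumr (bigD1 i) //= big1 => [|j /andP[Pj ji]]; last first.
    by rewrite mxdotZr E_orth ?mulr0 // eq_sym.
  by rewrite addr0 mxdotZr mulrA -normCK ler_piMr ?exprn_ge0 ?E_norm.
have := mxdot_ge0 (X - Y); rewrite mxdotBl !mxdotBr XY YX => h.
by rewrite -subr_ge0; apply: le_trans h _; rewrite gerBl subr_ge0.
Qed.

End FrobeniusProduct.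

Lemma big_upper_pairs (V : nmodType) n (F : 'I_n * 'I_n -> V) :
  \sum_(e in upper_pairs n) F e = \sum_(p : 'I_n) \sum_(q : 'I_n | (p < q)%N) F (p, q).
Proof. by rewrite pair_big_dep; apply: eq_big => -[p q] //=; rewrite inE. Qed.

Lemma big_pairs_split (V : nmodType) n (T : 'I_n -> 'I_n -> V) :
  \sum_q \sum_p T q p = \sum_p T p p + \sum_(e in upper_pairs n) (T e.1 e.2 + T e.2 e.1).
Proof.
have row q : \sum_p T q p =
    T q q + \sum_(p : 'I_n | (q < p)%N) T q p + \sum_(p : 'I_n | (p < q)%N) T q p.
  rewrite (bigD1 q) //= (bigID (fun p : 'I_n => (q < p)%N)) /= addrA.
  congr (_ + _ + _); apply: eq_bigl => p; case: (eqVneq p q) => [->|ne]; rewrite ?ltnn //=.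
  by rewrite -leqNgt ltn_neqAle val_eqE ne.
rewrite (eq_bigr _ (fun q _ => row q)) !big_split /= -addrA !big_upper_pairs.
by congr (_ + (_ + _)); rewrite (exchange_big_dep xpredT).
Qed.

Lemma normB_sqr_le (C : numClosedFieldType) (x y : C) :
  `|x - y| ^+ 2 <= 2%:R * (`|x| ^+ 2 + `|y| ^+ 2).
Proof.
have -> : 2%:R * (`|x| ^+ 2 + `|y| ^+ 2) = `|x - y| ^+ 2 + `|x + y| ^+ 2.
  by rewrite !normCK !rmorphD !rmorphN /=; ring.
by rewrite lerDl exprn_ge0.
Qed.

Lemma cross_form_ge (C : numClosedFieldType) n (sg : 'I_n -> C) (g : 'I_n -> 'I_n -> C) :
  (forall j, 0 <= sg j) ->
  - \sum_(e in upper_pairs n) pair_weight sg e * (`|g e.2 e.1 - g e.1 e.2| ^+ 2 / 2)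
    <= \sum_q \sum_p sg q * sg p * g q p * (g p q)^*.
Proof.
move=> sg_ge0; rewrite big_pairs_split -[X in X <= _]add0r; apply: lerD.
  by apply: sumr_ge0 => p _; rewrite -mulrA -normCK mulr_ge0 ?exprn_ge0 ?mulr_ge0.
rewrite -sumrN; apply: ler_sum => e _.
have polar (x y : C) : x * y^* + y * x^* = `|x + y| ^+ 2 / 2 - `|y - x| ^+ 2 / 2.
  by rewrite !normCK !rmorphD !rmorphN /=; field.
have -> : sg e.1 * sg e.2 * g e.1 e.2 * (g e.2 e.1)^* + sg e.2 * sg e.1 * g e.2 e.1 * (g e.1 e.2)^*
    = pair_weight sg e * (g e.1 e.2 * (g e.2 e.1)^* + g e.2 e.1 * (g e.1 e.2)^*).
  by rewrite /pair_weight; ring.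
rewrite polar -mulrN ler_wpM2l ?mulr_ge0 // addrC lerDr.
by rewrite divr_ge0 ?exprn_ge0 ?ler0n.
Qed.

(* [ptform (vec_mx a^T) (vec_mx v^T)] is <v, (a a^* )^Gamma v>, see [colform_ptform]. *)
Definition ptform (C : numClosedFieldType) m n (A V : 'M[C]_(m, n)) : C :=
  \tr (A *m adjmx V *m map_mx Num.conj A *m V^T).

Lemma ptform_expand (C : numClosedFieldType) m n (A V : 'M[C]_(m, n)) :
  ptform A V = \sum_i \sum_k \sum_j \sum_l (V i k)^* * (A j k * (A i l)^*) * V j l.
Proof.
rewrite /ptform /mxtrace.
under eq_bigr => j _ do rewrite mxE.
under eq_bigr => j _ do under eq_bigr => l _ do rewrite !mxE big_distrl /=.
under eq_bigr => j _ do under eq_bigr => l _ do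
  under eq_bigr => i _ do rewrite !mxE big_distrl big_distrl /=.
under eq_bigr => j _ do rewrite exchange_big /=.
under eq_bigr => j _ do under eq_bigr => i _ do rewrite exchange_big /=.
rewrite exchange_big /=; apply: eq_bigr => i _.
rewrite exchange_big /=; apply: eq_bigr => k _.
by apply: eq_bigr => j _; apply: eq_bigr => l _; rewrite !mxE; ring.
Qed.

Section SingularBasis.
Variables (C : numClosedFieldType) (m n : nat) (V : 'M[C]_(m, n)).

(* A singular value decomposition V = lsv *m rsv: rsv is unitary and the columns of
   lsv are orthogonal, of norms sv q. *)
Definition rsv := spectralmx (adjmx V *m V).
Definition lsv := V *m adjmx rsv.
Definition sv q := sqrtC ((adjmx lsv *m lsv) q q).
(* When [sv q = 0] the division makes [svmx q p] zero, which [svmx_norm] allows. *)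
Definition svmx q p : 'M[C]_(m, n) := \matrix_(j, r) ((lsv j q)^* * rsv p r / sv q).

Lemma rsv_unitary : rsv *m adjmx rsv = 1%:M.
Proof. exact: (unitarymxP (spectral_unitarymx _)). Qed.

Lemma lsvK : lsv *m rsv = V.
Proof. by rewrite /lsv -mulmxA (mulmx1C rsv_unitary) mulmx1. Qed.

Lemma lsv_gram : adjmx lsv *m lsv = diag_mx (spectral_diag (adjmx V *m V)).
Proof.
have gram_normal : adjmx V *m V \is normalmx.
  by apply/normalmxP; rewrite -/(adjmx _) adjmxM adjmxK.
have := orthomx_spectralP gram_normal.
rewrite -/rsv invmx_unitary ?spectral_unitarymx // -/(adjmx rsv).
set D := diag_mx _ => gramE.
rewrite /lsv adjmxM adjmxK !mulmxA -(mulmxA _ (adjmx V)) gramE.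
by rewrite !mulmxA rsv_unitary mul1mx -mulmxA rsv_unitary mulmx1.
Qed.

Lemma lsv_gram_offdiag q q' : q != q' -> (adjmx lsv *m lsv) q q' = 0.
Proof. by move=> ne; rewrite lsv_gram !mxE (negPf ne) mulr0n. Qed.

Lemma lsv_gram_diag q : (adjmx lsv *m lsv) q q = \sum_j `|lsv j q| ^+ 2.
Proof. by rewrite mxE; apply: eq_bigr => j _; rewrite !mxE normCKC. Qed.

Lemma sv_ge0 q : 0 <= sv q.
Proof. by rewrite sqrtC_ge0 lsv_gram_diag sumr_ge0 // => j _; rewrite exprn_ge0. Qed.

Lemma conj_sv q : (sv q)^* = sv q.
Proof. exact/geC0_conj/sv_ge0. Qed.

Lemma svK q : sv q ^+ 2 = (adjmx lsv *m lsv) q q.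
Proof. exact: sqrtCK. Qed.

Lemma sumsq_sv : sumsq sv = mxdot V V.
Proof.
have -> : sumsq sv = \tr (adjmx lsv *m lsv) by apply: eq_bigr => q _; rewrite svK.
rewrite /lsv adjmxM adjmxK mulmxA mxtrace_mulC !mulmxA (mulmx1C rsv_unitary) mul1mx.
rewrite /mxtrace /mxdot exchange_big; apply: eq_bigr => k _.
by rewrite mxE; apply: eq_bigr => i _; rewrite !mxE mulrC.
Qed.

Lemma mxdot_svmx q p q' p' : mxdot (svmx q p) (svmx q' p') =
  (adjmx lsv *m lsv) q q' * (rsv *m adjmx rsv) p p' / (sv q * sv q').
Proof.
rewrite /mxdot [(adjmx lsv *m lsv) q q']mxE [(rsv *m adjmx rsv) p p']mxE.
rewrite big_distrl big_distrl /=; apply: eq_bigr => j _.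
rewrite big_distrr big_distrl /=; apply: eq_bigr => r _.
by rewrite !mxE !rmorphM /= !fmorphV /= conjCK !conj_sv invfM; ring.
Qed.

Lemma svmx_orth (x y : 'I_n * 'I_n) :
  x != y -> mxdot (svmx x.1 x.2) (svmx y.1 y.2) = 0.
Proof.
case: x y => [q p] [q' p']; rewrite xpair_eqE negb_and => /orP[ne|ne].
  by rewrite mxdot_svmx lsv_gram_offdiag // !mul0r.
by rewrite mxdot_svmx rsv_unitary [1%:M p p']mxE (negPf ne) mulr0n mulr0 mul0r.
Qed.

Lemma svmx_norm q p : mxdot (svmx q p) (svmx q p) <= 1.
Proof.
rewrite mxdot_svmx rsv_unitary [1%:M p p]mxE eqxx mulr1 -expr2 svK.
by have [->|nz] := eqVneq ((adjmx lsv *m lsv) q q) 0; rewrite ?mul0r ?ler01 ?divff.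
Qed.

Definition twist (A : 'M[C]_(m, n)) := lsv^T *m A *m adjmx rsv.

Lemma ptform_twist A : ptform A V = \tr (twist A *m map_mx Num.conj (twist A)).
Proof.
rewrite /ptform -{1 2}lsvK adjmxM trmx_mul !mulmxA mxtrace_mulC /twist !map_mxM.
have conj_adj p q (M : 'M[C]_(p, q)) : map_mx Num.conj (adjmx M) = M^T.
  by apply/matrixP => i j; rewrite !mxE conjCK.
by rewrite conj_adj !mulmxA.
Qed.

Lemma twist_entry A q p : twist A q p = sv q * mxdot A (svmx q p).
Proof.
have -> : twist A q p = \sum_j \sum_r A j r * lsv j q * (rsv p r)^*.
  rewrite mxE; under eq_bigr => r _ do rewrite mxE big_distrl /=.
  by rewrite exchange_big; apply: eq_bigr => j _; apply: eq_bigr => r _; rewrite !mxE; ring.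
have [sv0|sv_neq0] := eqVneq (sv q) 0; last first.
  rewrite mulr_sumr; apply: eq_bigr => j _; rewrite mulr_sumr; apply: eq_bigr => r _.
  by rewrite !mxE !rmorphM /= fmorphV /= conjCK conj_sv; field.
have lsv0 j : lsv j q = 0.
  have /eqP := svK q; rewrite sv0 expr0n eq_sym lsv_gram_diag psumr_eq0 => [/allP/(_ j)|].
    by rewrite mem_index_enum sqrf_eq0 normr_eq0 => /(_ isT)/eqP.
  by move=> i _; rewrite exprn_ge0.
by rewrite sv0 mul0r big1 // => j _; rewrite big1 // => r _; rewrite lsv0 mulr0 mul0r.
Qed.

Lemma ptform_sv A :
  ptform A V = \sum_q \sum_p sv q * sv p * mxdot A (svmx q p) * (mxdot A (svmx p q))^*.
Proof.
rewrite ptform_twist; apply: eq_bigr => q _; rewrite mxE; apply: eq_bigr => p _.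
by rewrite [map_mx _ _ p q]mxE !twist_entry rmorphM /= conj_sv; ring.
Qed.

End SingularBasis.

Section AntisymmetricWeights.
Variables (C : numClosedFieldType) (m n N : nat) (V : 'M[C]_(m, n)).
Variable A : 'I_N -> 'M[C]_(m, n).
Hypothesis A_orthonormal : forall c c', mxdot (A c) (A c') = (c == c')%:R.

Definition asym c (e : 'I_n * 'I_n) :=
  `|mxdot (A c) (svmx V e.2 e.1 - svmx V e.1 e.2)| ^+ 2 / 2.

Lemma ptform_ge_asym c :
  - \sum_(e in upper_pairs n) pair_weight (sv V) e * asym c e <= ptform (A c) V.
Proof.
rewrite ptform_sv; under eq_bigr => e _ do rewrite /asym mxdotBr.
exact/cross_form_ge/sv_ge0.
Qed.

Lemma sum_asym_le1 (K : {set 'I_N}) e : e \in upper_pairs n -> \sum_(c in K) asym c e <= 1.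
Proof.
rewrite inE => lt_e; rewrite -mulr_suml ler_pdivrMr ?ltr0n // mul1r.
set Z := svmx V e.2 e.1 - svmx V e.1 e.2.
have swap_neq : (e.2, e.1) != (e.1, e.2).
  by rewrite xpair_eqE negb_and -(inj_eq val_inj) neq_ltn lt_e orbT.
have Z_norm : mxdot Z Z <= 2%:R.
  have swap_neq' : (e.1, e.2) != (e.2, e.1) by rewrite eq_sym.
  rewrite mxdotBl !mxdotBr (svmx_orth V swap_neq) (svmx_orth V swap_neq').
  by rewrite sub0r opprK subr0 (natrD _ 1 1) lerD ?svmx_norm.
apply: le_trans Z_norm; apply: le_trans (bessel (P := mem K) Z _ _) => [|c c' _ _ cc'|c _].
- by apply: ler_sum => c _; rewrite mxdotC norm_conjC.
- by rewrite A_orthonormal (negPf cc').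
- by rewrite A_orthonormal eqxx.
Qed.

Lemma sum_pairs_asym_le1 c : \sum_(e in upper_pairs n) asym c e <= 1.
Proof.
rewrite -mulr_suml ler_pdivrMr ?ltr0n // mul1r.
apply: le_trans (_ : \sum_(e in upper_pairs n) 2%:R * (`|mxdot (A c) (svmx V e.2 e.1)| ^+ 2
    + `|mxdot (A c) (svmx V e.1 e.2)| ^+ 2) <= _).
  by apply: ler_sum => e _; rewrite mxdotBr normB_sqr_le.
rewrite -mulr_sumr -[X in _ <= X]mulr1 ler_wpM2l ?ler0n //.
apply: le_trans (_ : \sum_q \sum_p `|mxdot (A c) (svmx V q p)| ^+ 2 <= _).
  rewrite (big_pairs_split (fun q p => `|mxdot (A c) (svmx V q p)| ^+ 2)).
  apply: ler_wpDl; first by apply: sumr_ge0 => p _; rewrite exprn_ge0.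
  by apply: ler_sum => e _; rewrite addrC.
have := bessel (P := xpredT) (E := fun x : 'I_n * 'I_n => svmx V x.1 x.2) (A c)
  (fun x y _ _ xy => svmx_orth V xy) (fun x _ => svmx_norm V x.1 x.2).
by rewrite A_orthonormal eqxx pair_big.
Qed.

Lemma sum_ptform_ge (K : {set 'I_N}) (B : C) : (0 < #|K|)%N ->
  (forall S : {set 'I_n * 'I_n}, S \subset upper_pairs n -> (#|S| <= #|K|)%N ->
     \sum_(e in S) pair_weight (sv V) e <= B) ->
  - B <= \sum_(c in K) ptform (A c) V.
Proof.
move=> K_gt0 weight_le.
pose P (e : 'I_n * 'I_n) := \sum_(c in K) asym c e.
apply: le_trans (_ : - \sum_(e in upper_pairs n) pair_weight (sv V) e * P e <= _).
  rewrite lerN2; apply: sum_frac_selection_le weight_le => // [e _|e e_upper|].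
  - by rewrite mulr_ge0 ?sv_ge0.
  - by rewrite sumr_ge0 ?sum_asym_le1 // => c _; rewrite divr_ge0 ?exprn_ge0 ?ler0n.
  - rewrite exchange_big /=; apply: le_trans (ler_sum _ (fun c _ => sum_pairs_asym_le1 c)) _.
    by rewrite sumr_const.
under eq_bigr => e _ do rewrite /P mulr_sumr.
rewrite exchange_big /= -sumrN; apply: ler_sum => c _.
exact: ptform_ge_asym.
Qed.

End AntisymmetricWeights.

Section UnitaryConjugation.
Variables (C : numClosedFieldType) (m n : nat).
Variables (U : 'M[C]_(m * n)) (v : 'cV[C]_(m * n)).

Definition colform c := (adjmx v *m ptrans (col c U *m adjmx (col c U)) *m v) 0 0.
Definition umx c : 'M[C]_(m, n) := vec_mx (col c U)^T.
Definition vmx : 'M[C]_(m, n) := vec_mx v^T.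

Lemma colformE c : colform c = \sum_a \sum_b
  (v a 0)^* * (U (mxvec_index (tpair b).1 (tpair a).2) c *
               (U (mxvec_index (tpair a).1 (tpair b).2) c)^*) * v b 0.
Proof.
rewrite /colform adjmx_formE; apply: eq_bigr => a _; apply: eq_bigr => b _.
by rewrite [ptrans _ a b]mxE mxE big_ord1 !mxE.
Qed.

Lemma form_ptrans_diag (r : 'rV[C]_(m * n)) :
  (adjmx v *m ptrans (U *m diag_mx r *m adjmx U) *m v) 0 0 = \sum_c r 0 c * colform c.
Proof.
have entry x y : (U *m diag_mx r *m adjmx U) x y = \sum_c r 0 c * (U x c * (U y c)^*).
  by rewrite mxE; apply: eq_bigr => c _; rewrite mul_mx_diag !mxE; ring.
rewrite adjmx_formE.
under eq_bigr => a _ do under eq_bigr => b _ do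
  rewrite [ptrans _ a b]mxE entry big_distrr big_distrl /=.
under [RHS]eq_bigr => c _ do rewrite colformE big_distrr /=.
under [RHS]eq_bigr => c _ do under eq_bigr => a _ do rewrite big_distrr /=.
rewrite [RHS]exchange_big /=; apply: eq_bigr => a _.
rewrite [RHS]exchange_big /=; apply: eq_bigr => b _.
by apply: eq_bigr => c _; ring.
Qed.

Lemma colform_ptform c : colform c = ptform (umx c) vmx.
Proof.
rewrite colformE ptform_expand big_mxvec_index; apply: eq_bigr => i _; apply: eq_bigr => k _.
rewrite big_mxvec_index; apply: eq_bigr => j _; apply: eq_bigr => l _.
by rewrite !tpairK /= !mxE.
Qed.

Hypothesis U_unitary : U *m adjmx U = 1%:M.

Lemma sum_colform : \sum_c colform c = mxdot vmx vmx.
Proof.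
have := form_ptrans_diag (const_mx 1); rewrite diag_const_mx mulmx1 U_unitary ptrans1.
under [in X in _ = X -> _]eq_bigr => c _ do rewrite mxE mul1r.
move=> <-; rewrite adjmx_formE /mxdot big_mxvec_index; apply: eq_bigr => i _; apply: eq_bigr => k _.
rewrite (bigD1 (mxvec_index i k)) //= big1 => [|b b_neq]; last first.
  by rewrite mxE eq_sym (negPf b_neq) mulr0 mul0r.
by rewrite !mxE eqxx mulr1 addr0 mulrC.
Qed.

Lemma umx_orthonormal c c' : mxdot (umx c) (umx c') = (c == c')%:R.
Proof.
have := congr1 (fun M : 'M[C]_(m * n) => M c' c) (mulmx1C U_unitary); rewrite !mxE eq_sym => <-.
rewrite /mxdot [RHS]big_mxvec_index; apply: eq_bigr => i _; apply: eq_bigr => k _.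
by rewrite !mxE mulrC.
Qed.

Lemma form_ptrans_diag_split (K : {set 'I_(m * n)}) (r : 'rV[C]_(m * n)) (coef : C) :
  (forall c, r 0 c = 1 + coef * (c \in K)%:R) ->
  (adjmx v *m ptrans (U *m diag_mx r *m adjmx U) *m v) 0 0 =
    mxdot vmx vmx + coef * \sum_(c in K) ptform (umx c) vmx.
Proof.
move=> rE; rewrite form_ptrans_diag -sum_colform mulr_sumr.
rewrite [X in _ = _ + X]big_mkcond -big_split /=.
by apply: eq_bigr => c _; rewrite rE colform_ptform; case: (c \in K) => /=; ring.
Qed.

End UnitaryConjugation.

Lemma card_ord_lt N k : (k <= N)%N -> #|[set c : 'I_N | (c < k)%N]| = k.
Proof.
move=> k_le; rewrite -sum1_card (eq_bigl (fun c : 'I_N => (c < k)%N)) => [|c]; last first.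
  by rewrite inE.
by rewrite (big_ord_narrow k_le) sum1_card card_ord.
Qed.

Lemma absPPT_diag (C : numClosedFieldType) (m n : nat) (r : 'rV[C]_(m * n))
    (K : {set 'I_(m * n)}) (coef : C) :
  (0 < #|K|)%N -> 0 <= coef -> (forall c, r 0 c = 1 + coef * (c \in K)%:R) ->
  (forall sg : 'I_n -> C, (forall j, 0 <= sg j) -> exists2 B : C,
     coef * B <= sumsq sg &
     forall S : {set 'I_n * 'I_n}, S \subset upper_pairs n -> (#|S| <= #|K|)%N ->
       \sum_(e in S) pair_weight sg e <= B) ->
  absPPT (diag_mx r).
Proof.
move=> K_gt0 coef_ge0 rE weight_bound.
have r_ge0 c : 0 <= r 0 c by rewrite rE addr_ge0 ?mulr_ge0 ?ler0n.
split => [|U U_unitary]; first exact: psdmx_diag.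
split => [|v]; first exact/ptrans_selfadj/conjugate_selfadj/diag_mx_selfadj.
rewrite (form_ptrans_diag_split v U_unitary rE) -sumsq_sv.
have [B coefB weight_le] := weight_bound _ (sv_ge0 (vmx v)).
have ptform_ge := sum_ptform_ge (umx_orthonormal U_unitary) K_gt0 weight_le.
apply: le_trans (_ : 0 <= sumsq (sv (vmx v)) - coef * B) _; first by rewrite subr_ge0.
by rewrite lerD2l -mulrN ler_wpM2l.
Qed.

Unset Implicit Arguments.

Theorem lemma7 (C : numClosedFieldType) (m n : nat) :
  (2 <= m)%N -> (2 <= n)%N ->
  absPPT (rho1 C (m * n)) /\ absPPT (rho2 C (m * n)).
Proof.
move=> m_ge2 n_ge2; have mn_ge4 : (4 <= m * n)%N := leq_mul m_ge2 n_ge2.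
have sqrt2_gt0 : 0 < sqrtC 2 :> C by rewrite sqrtC_gt0 ltr0n.
split.
  apply: (absPPT_diag (K := [set c : 'I_(m * n) | (c < 2)%N]) (coef := sqrtC 2)).
  - by rewrite card_ord_lt // (leq_trans _ mn_ge4).
  - exact: ltW.
  - by move=> c; rewrite !mxE inE; case: (c < 2)%N => /=; ring.
  move=> sg sg_ge0; exists (sumsq sg / sqrtC 2); first by rewrite mulrC divfK ?gt_eqF.
  move=> S S_upper; rewrite card_ord_lt ?(leq_trans _ mn_ge4) // => S_le2.
  rewrite ler_pdivlMr // mulrC.
  by apply: (weight_card2_le sg_ge0 sqrt2_gt0 (sqrtCK _)).
apply: (absPPT_diag (K := [set c : 'I_(m * n) | (c < 3)%N]) (coef := 1)).
- by rewrite card_ord_lt // (leq_trans _ mn_ge4).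
- exact: ler01.
- by move=> c; rewrite !mxE inE; case: (c < 3)%N => /=; ring.
move=> sg sg_ge0; exists (sumsq sg); first by rewrite mul1r.
move=> S S_upper; rewrite card_ord_lt ?(leq_trans _ mn_ge4) //.
exact: weight_card3_le.
Qed.
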